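(* Let $S$ and $R$ be finite sequences of formulas and $I,J$ models. Then $I\equiv_{\emptyset S\cdot R}J$ holds if and only if both $I\equiv_{\emptyset S}J$ and $I\equiv_{\emptyset R}J$ hold.
   Context: Propositional models are truth assignments over a finite set of variables; a formula used where a set of models is expected stands for its set of models. A doxastic state is a sequence $C=[C(0),\ldots,C(k)]$ of nonempty, pairwise disjoint sets of models covering all models; $I\le_C J$ iff $I\in C(i)$, $J\in C(j)$ with $i\le j$; $I\equiv_C J$ iff $I\le_C J$ and $J\le_C I$. The flat doxastic state $\emptyset$ is $[\text{all models}]$. Lexicographic revision: $C\,\mathrm{lex}(A)=[C(0)\cap A,\ldots,C(k)\cap A,C(0)\setminus A,\ldots,C(k)\setminus A]$, empty sets discarded. For a sequence of formulas $T=[T_1,\ldots,T_n]$, $\emptyset T$ denotes $\emptyset$ revised lexicographically by $T_1$, then $T_2$, ..., then $T_n$. $S\cdot R$ is concatenation. *)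

From mathcomp Require Import all_boot.
Set Implicit Arguments. Unset Strict Implicit. Unset Printing Implicit Defensive.

Inductive formula (n : nat) : Type :=
| FVar of 'I_n
| FTop
| FBot
| FNot of formula n
| FAnd of formula n & formula n
| FOr of formula n & formula n
| FImp of formula n & formula n.

Definition model (n : nat) := {ffun 'I_n -> bool}.

Fixpoint sat n (I : model n) (f : formula n) : bool :=
  match f with
  | FVar x => I x
  | FTop => true
  | FBot => false
  | FNot g => ~~ sat I g
  | FAnd g h => sat I g && sat I h
  | FOr g h => sat I g || sat I h
  | FImp g h => sat I g ==> sat I h
  end.

Definition mods n (f : formula n) : {set model n} := [set I | sat I f].

(* A doxastic state: a sequence of sets of models [C(0); ...; C(k)]. *)
Definition doxstate n := seq {set model n}.

Definition flat n : doxstate n := [:: [set: model n]].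

Definition lex n (C : doxstate n) (A : formula n) : doxstate n :=
  [seq X <- [seq X :&: mods A | X <- C] ++ [seq X :\: mods A | X <- C] | X != set0].

(* emptyset T : flat state revised by T_1, ..., T_n in order. *)
Definition revise_seq n (C : doxstate n) (T : seq (formula n)) : doxstate n :=
  foldl (@lex n) C T.

Definition flat_rev n (T : seq (formula n)) : doxstate n := revise_seq (flat n) T.

Definition le_st n (C : doxstate n) (I J : model n) : Prop :=
  exists i j, (i <= j)%N /\ (i < size C)%N /\ (j < size C)%N /\
    I \in nth set0 C i /\ J \in nth set0 C j.

Definition equiv_st n (C : doxstate n) (I J : model n) : Prop :=
  le_st C I J /\ le_st C J I.

From Corelib Require Import Setoid.
From mathcomp Require Import all_boot.

Set Implicit Arguments.
Unset Strict Implicit.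
Unset Printing Implicit Defensive.

(* Every doxastic state reachable from the flat one by lexicographic revisions
   is a partition of the models, so I and J are equivalent in it exactly when
   they lie in a common block.  Revising by A splits every block along A, hence
   I and J share a block of the flat state revised by T iff every formula of T
   is true in both or false in both, a condition that is conjunctive in T. *)

Lemma count_filter_sub T (a p : pred T) (s : seq T) :
  subpred a p -> count a (filter p s) = count a s.
Proof.
move=> sub_ap; rewrite count_filter; apply: eq_count => x /=.
by case: (boolP (a x)) => // /sub_ap ->.
Qed.

Lemma has_filter_sub T (a p : pred T) (s : seq T) :
  subpred a p -> has a (filter p s) = has a s.
Proof. by move=> sub_ap; rewrite !has_count count_filter_sub. Qed.

Lemma has_predI_const T (a : pred T) (b : bool) (s : seq T) :
  has (fun x => a x && b) s = has a s && b.
Proof.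
case: b; last by rewrite andbF; elim: s => //= x s ->; rewrite andbF.
by rewrite andbT; apply: eq_has => x; rewrite andbT.
Qed.

Lemma count1_find T (a : pred T) (x0 : T) (s : seq T) i :
  count a s = 1 -> i < size s -> a (nth x0 s i) -> i = find a s.
Proof.
elim: s i => //= x s IHs [|i] count1 /=; first by move=> _ ->.
rewrite ltnS => lt_i_s ai.
have has_a : 0 < count a s by rewrite -has_count; apply/(has_nthP x0); exists i.
case: (a x) count1 => /= [/eqP|count1]; first by rewrite add1n eqSS eqn0Ngt has_a.
by rewrite (IHs i).
Qed.

Section Revision.

Variable n : nat.
Implicit Types (C : seq {set model n}) (A : formula n) (T : seq (formula n)) (I J : model n).

Definition partition_state C := forall I, count (fun X : {set model n} => I \in X) C = 1.

Definition same_block C I J := has (fun X : {set model n} => (I \in X) && (J \in X)) C.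

Definition agree_on T I J := all (fun f => sat I f == sat J f) T.

Lemma partition_flat : partition_state (flat n).
Proof. by move=> I; rewrite /= inE. Qed.

Lemma same_block_flat I J : same_block (flat n) I J.
Proof. by rewrite /same_block /= !inE. Qed.

Lemma partition_lex C A : partition_state C -> partition_state (lex C A).
Proof.
move=> partC I; rewrite /lex count_filter_sub; last by move=> X XI; apply/set0Pn; exists I.
rewrite count_cat !count_map -(partC I).
have inI X : I \in X :&: mods A = (I \in X) && sat I A by rewrite !inE.
have inD X : I \in X :\: mods A = (I \in X) && ~~ sat I A by rewrite !inE andbC.
rewrite (eq_count inI) (eq_count inD).
by case: (sat I A);
  rewrite (eq_count (fun X => andbT _)) (eq_count (fun X => andbF _)) count_pred0 ?addn0.
Qed.

Lemma same_block_lex C A I J :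
  same_block (lex C A) I J = same_block C I J && (sat I A == sat J A).
Proof.
rewrite /same_block /lex has_filter_sub; last by move=> X /andP[XI _]; apply/set0Pn; exists I.
rewrite has_cat !has_map.
have inI X : (I \in X :&: mods A) && (J \in X :&: mods A) =
    (I \in X) && (J \in X) && (sat I A && sat J A).
  by rewrite !inE; case: (I \in X) (J \in X) (sat I A) (sat J A) => [] [] [] [].
have inD X : (I \in X :\: mods A) && (J \in X :\: mods A) =
    (I \in X) && (J \in X) && (~~ sat I A && ~~ sat J A).
  by rewrite !inE; case: (I \in X) (J \in X) (sat I A) (sat J A) => [] [] [] [].
rewrite (eq_has inI) (eq_has inD) !has_predI_const.
by case: (sat I A); case: (sat J A); rewrite /= ?andbT ?andbF ?orbF.
Qed.

Lemma partition_revise C T : partition_state C -> partition_state (revise_seq C T).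
Proof. by elim: T C => //= f T IHT C partC; apply/IHT/partition_lex. Qed.

Lemma same_block_revise C T I J :
  same_block (revise_seq C T) I J = same_block C I J && agree_on T I J.
Proof. by elim: T C => [|f T IHT] C /=; rewrite ?andbT // IHT same_block_lex andbA. Qed.

Lemma equiv_same_block C I J : partition_state C -> equiv_st C I J <-> same_block C I J.
Proof.
move=> partC; split.
  move=> [[i [j [le_ij [ltiC [ltjC [Ii Jj]]]]]] [j' [i' [le_ji [ltj'C [lti'C [Jj' Ii']]]]]]].
  have eq_ii' : i = i' by rewrite (count1_find (partC I) ltiC Ii) (count1_find (partC I) lti'C Ii').
  have eq_jj' : j = j' by rewrite (count1_find (partC J) ltjC Jj) (count1_find (partC J) ltj'C Jj').
  have eq_ij : i = j by apply/eqP; rewrite eqn_leq le_ij eq_jj' eq_ii' le_ji.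
  by apply/(has_nthP set0); exists i; rewrite // Ii eq_ij.
case/(has_nthP set0) => i ltiC /andP[Ii Ji].
by split; exists i, i.
Qed.

End Revision.

Lemma equiv_flat_rev n (T : seq (formula n)) I J :
  equiv_st (flat_rev T) I J <-> agree_on T I J.
Proof.
rewrite equiv_same_block; last exact/partition_revise/partition_flat.
by rewrite same_block_revise same_block_flat.
Qed.

Theorem mainTheorem20 (n : nat) (S R : seq (formula n)) (I J : model n) :
  equiv_st (flat_rev (S ++ R)) I J <->
  equiv_st (flat_rev S) I J /\ equiv_st (flat_rev R) I J.
Proof.
rewrite !equiv_flat_rev /agree_on all_cat.
by split=> [/andP | [-> ->]].
Qed.
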